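(* Let $*\in\{\mathrm{nc},\mathrm{c},\mathrm{cr},\mathrm{u},\mathrm{cu},\mathrm{cur}\}$. The functor $\mathfrak{P}^*:\mathbf{A}_*\to\mathbf{A}_*$, together with the natural transformation given by the inclusions $\mathfrak{P}^*(A)\hookrightarrow A$, is a costrict homotopization of the identity functor $\mathrm{id}:\mathbf{A}_*\to\mathbf{A}_*$; that is, $\mathfrak{P}^*$ is homotopy invariant and for every homotopy invariant functor $G:\mathbf{A}_*\to\mathbf{A}_*$ and natural transformation $\beta:G\to\mathrm{id}$ there is a unique natural transformation $\overline{\beta}:G\to\mathfrak{P}^*$ with $\beta=\iota\circ\overline{\beta}$, where $\iota$ denotes the inclusion transformation.
   Context: Fix a field $\mathbb{F}$; algebras are associative $\mathbb{F}$-algebras. $\mathbf{A}_{\mathrm{nc}}$: all algebras; $\mathbf{A}_{\mathrm{c}},\mathbf{A}_{\mathrm{cr}}$: commutative, resp. commutative reduced algebras; $\mathbf{A}_{\mathrm{u}}$: unital algebras with unit-preserving morphisms; $\mathbf{A}_{\mathrm{cu}},\mathbf{A}_{\mathrm{cur}}$: commutative, resp. commutative reduced unital algebras. For $A\in\mathbf{A}_*$, $\mathfrak{P}^*(A)$ is the set of $a\in A$ such that for every $C\in\mathbf{A}_*$ and every morphism $\varphi:A\to C[x]$ (unit-preserving in the unital cases), $\varphi(a)$ is a constant polynomial (lies in $C$); it is a subalgebra (containing the unit in unital cases), and $\mathfrak{P}^*(f)=f|_{\mathfrak{P}^*(A)}$. (The paper defines $\mathfrak{P}^*(A)$ via a universal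 pro-algebra $\mathfrak{M}^*_{A,\mathbb{F}[x]}$ and proves equality with this set.) Homotopy: $f,g:A\to B$ in $\mathbf{A}_*$ are elementary homotopic if there is $H:A\to B[x]$ in $\mathbf{A}_*$ with $H$ followed by evaluation at $x=0$ (resp. $x=1$) equal to $f$ (resp. $g$); homotopic if connected by a finite chain of elementary homotopies. A functor is homotopy invariant if it identifies homotopic morphisms. *)

From HB Require Import structures.
From mathcomp Require Import all_boot all_algebra.
From Stdlib Require Import ProofIrrelevance Relations.
Set Implicit Arguments.
Unset Strict Implicit.
Unset Printing Implicit Defensive.
Import GRing.Theory.
Local Open Scope ring_scope.

Section Defs.
Variable F : fieldType.

Record alg := Alg {
  alg_car :> Type;
  azero : alg_car;
  aadd : alg_car -> alg_car -> alg_car;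
  aopp : alg_car -> alg_car;
  ascale : F -> alg_car -> alg_car;
  amul : alg_car -> alg_car -> alg_car;
  aaddA : forall x y z, aadd x (aadd y z) = aadd (aadd x y) z;
  aaddC : forall x y, aadd x y = aadd y x;
  aadd0 : forall x, aadd azero x = x;
  aaddN : forall x, aadd (aopp x) x = azero;
  ascaleA : forall a b x, ascale a (ascale b x) = ascale (a * b) x;
  ascale1 : forall x, ascale 1 x = x;
  ascaleDr : forall a x y, ascale a (aadd x y) = aadd (ascale a x) (ascale a y);
  ascaleDl : forall a b x, ascale (a + b) x = aadd (ascale a x) (ascale b x);
  amulA : forall x y z, amul x (amul y z) = amul (amul x y) z;
  amulDl : forall x y z, amul (aadd x y) z = aadd (amul x z) (amul y z);
  amulDr : forall x y z, amul x (aadd y z) = aadd (amul x y) (amul x z);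
  amulZl : forall a x y, amul (ascale a x) y = ascale a (amul x y);
  amulZr : forall a x y, amul x (ascale a y) = ascale a (amul x y)
}.

Arguments azero {_}.

Fixpoint csum (A : alg) (n : nat) (h : nat -> A) : A :=
  match n with 0 => azero | S m => aadd (csum m h) (h m) end.

(* apow x n = x^(n+1) *)
Fixpoint apow (A : alg) (x : A) (n : nat) : A :=
  match n with 0 => x | S m => amul x (apow x m) end.

Definition is_unit (A : alg) (e : A) : Prop :=
  forall x, amul e x = x /\ amul x e = x.

Definition acomm (A : alg) : Prop := forall x y : A, amul x y = amul y x.

Definition areduced (A : alg) : Prop :=
  forall (x : A) n, apow x n = azero -> x = azero.

Inductive variant := Vnc | Vc | Vcr | Vu | Vcu | Vcur.

Definition vunital (v : variant) : bool :=
  match v with Vu | Vcu | Vcur => true | _ => false end.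
Definition vcomm (v : variant) : bool :=
  match v with Vc | Vcr | Vcu | Vcur => true | _ => false end.
Definition vred (v : variant) : bool :=
  match v with Vcr | Vcur => true | _ => false end.

Definition in_cat (v : variant) (A : alg) : Prop :=
  [/\ vunital v -> exists e : A, is_unit e,
      vcomm v -> acomm A &
      vred v -> areduced A].

Record obj (v : variant) := Obj { oalg :> alg; oP : in_cat v oalg }.

Record hom (v : variant) (A B : obj v) := Hom {
  hfun :> A -> B;
  hom_add : forall x y, hfun (aadd x y) = aadd (hfun x) (hfun y);
  hom_scale : forall a x, hfun (ascale a x) = ascale a (hfun x);
  hom_mul : forall x y, hfun (amul x y) = amul (hfun x) (hfun y);
  hom_unit : vunital v -> forall e, is_unit e -> is_unit (hfun e)
}.

Definition homeq (v : variant) (A B : obj v) (f g : hom A B) : Prop :=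
  forall x, f x = g x.

Definition idhom (v : variant) (A : obj v) : hom A A :=
  @Hom v A A (fun x => x) (fun _ _ => erefl) (fun _ _ => erefl)
    (fun _ _ => erefl) (fun _ _ H => H).

Section Comp.
Variables (v : variant) (A B C : obj v) (g : hom B C) (f : hom A B).
Lemma homcomp_add x y : g (f (aadd x y)) = aadd (g (f x)) (g (f y)).
Proof. by rewrite !hom_add. Qed.
Lemma homcomp_scale a x : g (f (ascale a x)) = ascale a (g (f x)).
Proof. by rewrite !hom_scale. Qed.
Lemma homcomp_mul x y : g (f (amul x y)) = amul (g (f x)) (g (f y)).
Proof. by rewrite !hom_mul. Qed.
Lemma homcomp_unit : vunital v -> forall e, is_unit e -> is_unit (g (f e)).
Proof. by move=> u e He; apply: hom_unit => //; apply: hom_unit. Qed.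
Definition homcomp : hom A C :=
  Hom homcomp_add homcomp_scale homcomp_mul homcomp_unit.
End Comp.

(* Morphisms A -> C[x] in A_v.  An element of C[x] = (+)_n C x^n is     *)
(* given by its coefficient sequence (finitely supported), with the    *)
(* convolution product; coef n a is the coefficient of x^n in phi(a).  *)
(* The unit of C[x] (when C is unital) is the constant polynomial 1.   *)
Record polyhom (v : variant) (A C : obj v) := PolyHom {
  coef : nat -> A -> C;
  coef_fin : forall a, exists N, forall n, (N <= n)%N -> coef n a = azero;
  coef_add : forall n x y, coef n (aadd x y) = aadd (coef n x) (coef n y);
  coef_scale : forall n a x, coef n (ascale a x) = ascale a (coef n x);
  coef_mul : forall n x y,
    coef n (amul x y) = csum n.+1 (fun i => amul (coef i x) (coef (n - i) y));
  coef_unit : vunital v -> forall e, is_unit e ->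
    is_unit (coef 0 e) /\ forall n, coef n.+1 e = azero
}.

Section PComp.
Variables (v : variant) (A B C : obj v) (phi : polyhom B C) (f : hom A B).
Lemma pcomp_fin a : exists N, forall n, (N <= n)%N -> coef phi n (f a) = azero.
Proof. exact: coef_fin. Qed.
Lemma pcomp_add n x y :
  coef phi n (f (aadd x y)) = aadd (coef phi n (f x)) (coef phi n (f y)).
Proof. by rewrite hom_add coef_add. Qed.
Lemma pcomp_scale n a x :
  coef phi n (f (ascale a x)) = ascale a (coef phi n (f x)).
Proof. by rewrite hom_scale coef_scale. Qed.
Lemma pcomp_mul n x y : coef phi n (f (amul x y)) =
  csum n.+1 (fun i => amul (coef phi i (f x)) (coef phi (n - i) (f y))).
Proof. by rewrite hom_mul coef_mul. Qed.
Lemma pcomp_unit : vunital v -> forall e, is_unit e ->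
  is_unit (coef phi 0 (f e)) /\ forall n, coef phi n.+1 (f e) = azero.
Proof. by move=> u e He; apply: coef_unit => //; apply: hom_unit. Qed.
Definition pcomp : polyhom A C :=
  @PolyHom v A C (fun n a => coef phi n (f a))
    pcomp_fin pcomp_add pcomp_scale pcomp_mul pcomp_unit.
End PComp.

(* H : A -> B[x] with ev_{x=0} o H = f and ev_{x=1} o H = g;
   ev_{x=1} of a polynomial is the sum of its coefficients. *)
Definition elem_homotopic (v : variant) (A B : obj v) (f g : hom A B) : Prop :=
  exists H : polyhom A B,
    (forall a, coef H 0 a = f a) /\
    (forall a N, (forall n, (N <= n)%N -> coef H n a = azero) ->
       csum N (fun n => coef H n a) = g a).

Definition homotopic (v : variant) (A B : obj v) : hom A B -> hom A B -> Prop :=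
  clos_refl_trans (hom A B) (@elem_homotopic v A B).

Record functor (v : variant) := Functor {
  Fobj : obj v -> obj v;
  Fmor : forall A B : obj v, hom A B -> hom (Fobj A) (Fobj B);
  Fmor_ext : forall (A B : obj v) (f g : hom A B),
    homeq f g -> homeq (Fmor f) (Fmor g);
  Fmor_id : forall A : obj v, homeq (Fmor (idhom A)) (idhom (Fobj A));
  Fmor_comp : forall (A B C : obj v) (f : hom A B) (g : hom B C),
    homeq (Fmor (homcomp g f)) (homcomp (Fmor g) (Fmor f))
}.

Record nattrans (v : variant) (G H : functor v) := NatTrans {
  ntc :> forall A : obj v, hom (Fobj G A) (Fobj H A);
  ntc_nat : forall (A B : obj v) (f : hom A B),
    homeq (homcomp (Fmor H f) (ntc A)) (homcomp (ntc B) (Fmor G f))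
}.

Definition homotopy_invariant (v : variant) (G : functor v) : Prop :=
  forall (A B : obj v) (f g : hom A B), homotopic f g ->
    homeq (Fmor G f) (Fmor G g).

Definition idF (v : variant) : functor v :=
  @Functor v (fun A => A) (fun A B f => f) (fun A B f g H => H)
    (fun A x => erefl) (fun A B C f g x => erefl).

Section Facts.
Variable A : alg.
Implicit Types x y : A.

Lemma aaddx0 x : aadd x azero = x.
Proof. by rewrite aaddC aadd0. Qed.

Lemma aaddKl x y : aadd (aopp x) (aadd x y) = y.
Proof. by rewrite aaddA aaddN aadd0. Qed.

Lemma aself_eq0 x : aadd x x = x -> x = azero.
Proof. by move=> H; rewrite -{1}(aaddKl x x) H aaddN. Qed.

Lemma amul0l y : amul azero y = azero :> A.
Proof. by apply: aself_eq0; rewrite -amulDl aadd0. Qed.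

Lemma amul0r y : amul y azero = azero :> A.
Proof. by apply: aself_eq0; rewrite -amulDr aadd0. Qed.

Lemma ascale0 a : ascale a azero = azero :> A.
Proof. by apply: aself_eq0; rewrite -ascaleDr aadd0. Qed.

Lemma csum_eq0 n (h : nat -> A) :
  (forall i, (i < n)%N -> h i = azero) -> csum n h = azero.
Proof.
elim: n => [//|n IH] Hh /=.
by rewrite IH ?Hh ?aadd0 // => i Hi; apply: Hh; apply: ltnW.
Qed.
End Facts.

Lemma additive0 (A B : alg) (h : A -> B) :
  (forall x y, h (aadd x y) = aadd (h x) (h y)) -> h azero = azero.
Proof. by move=> Hh; apply: aself_eq0; rewrite -Hh aadd0. Qed.

Section P.
Variables (v : variant) (A : obj v).

(* a in P^v(A) iff phi(a) is constant for every C in A_v and every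
   morphism phi : A -> C[x] in A_v *)
Definition inP (a : A) : Prop :=
  forall (C : obj v) (phi : polyhom A C) n, coef phi n.+1 a = azero.

Lemma inP0 : inP azero.
Proof. by move=> C phi n; apply: additive0; apply: coef_add. Qed.

Lemma inPD x y : inP x -> inP y -> inP (aadd x y).
Proof. by move=> Hx Hy C phi n; rewrite coef_add Hx Hy aadd0. Qed.

Lemma inPN x : inP x -> inP (aopp x).
Proof.
move=> Hx C phi n.
have := coef_add phi n.+1 (aopp x) x.
by rewrite aaddN Hx aaddx0 => <-; apply: inP0.
Qed.

Lemma inPZ a x : inP x -> inP (ascale a x).
Proof. by move=> Hx C phi n; rewrite coef_scale Hx ascale0. Qed.

Lemma inPM x y : inP x -> inP y -> inP (amul x y).
Proof.
move=> Hx Hy C phi n; rewrite coef_mul; apply: csum_eq0 => -[|i] Hi.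
  by rewrite subn0 Hy amul0r.
by rewrite Hx amul0l.
Qed.

Definition Pcar := {a : A | inP a}.

Lemma Peq (x y : Pcar) : proj1_sig x = proj1_sig y -> x = y.
Proof.
case: x => x px; case: y => y py /= E; subst y.
by rewrite (proof_irrelevance _ px py).
Qed.

Definition Pzero : Pcar := exist _ azero inP0.
Definition Padd (x y : Pcar) : Pcar :=
  exist _ (aadd (proj1_sig x) (proj1_sig y)) (inPD (proj2_sig x) (proj2_sig y)).
Definition Popp (x : Pcar) : Pcar := exist _ (aopp (proj1_sig x)) (inPN (proj2_sig x)).
Definition Pscale (a : F) (x : Pcar) : Pcar :=
  exist _ (ascale a (proj1_sig x)) (inPZ a (proj2_sig x)).
Definition Pmul (x y : Pcar) : Pcar :=
  exist _ (amul (proj1_sig x) (proj1_sig y)) (inPM (proj2_sig x) (proj2_sig y)).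

Definition Palg : alg.
Proof.
refine (@Alg Pcar Pzero Padd Popp Pscale Pmul _ _ _ _ _ _ _ _ _ _ _ _ _);
  intros; apply: Peq; simpl.
- exact: aaddA.  - exact: aaddC.  - exact: aadd0.  - exact: aaddN.
- exact: ascaleA. - exact: ascale1. - exact: ascaleDr. - exact: ascaleDl.
- exact: amulA.  - exact: amulDl. - exact: amulDr. - exact: amulZl.
- exact: amulZr.
Defined.

Lemma inP_unit (u : A) : vunital v -> is_unit u -> inP u.
Proof. by move=> Hv Hu C phi n; case: (coef_unit phi Hv Hu) => _ ->. Qed.

Lemma Punit_of (u : A) (pu : inP u) : is_unit u -> @is_unit Palg (exist _ u pu).
Proof. by move=> Hu x; split; apply: Peq; case: (Hu (proj1_sig x)). Qed.

Lemma Punit_val (e : Palg) : vunital v -> is_unit e -> is_unit (proj1_sig e).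
Proof.
move=> Hv He; case: (oP A) => /(_ Hv) [u Hu] _ _.
have pu := inP_unit Hv Hu.
have Hu' := Punit_of pu Hu.
have -> : e = exist _ u pu.
  by case: (He (exist _ u pu)) => <- _; case: (Hu' e) => _ ->.
exact: Hu.
Qed.

Lemma Pval_pow (x : Palg) n : proj1_sig (apow x n) = apow (proj1_sig x) n.
Proof. by elim: n => [//|n IH] /=; rewrite IH. Qed.

Lemma Palg_in_cat : in_cat v Palg.
Proof.
case: (oP A) => Hu Hc Hr; split.
- move=> Hv; case: (Hu Hv) => u Hu1.
  by exists (exist _ u (inP_unit Hv Hu1)); apply: Punit_of.
- by move=> Hv x y; apply: Peq; apply: Hc.
- move=> Hv x n E; apply: Peq; apply: (Hr Hv _ n).
  by rewrite -Pval_pow E.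
Qed.

Definition Pobj : obj v := Obj Palg_in_cat.

Definition iota_hom : hom Pobj A :=
  @Hom v Pobj A (fun x => proj1_sig x) (fun _ _ => erefl) (fun _ _ => erefl)
    (fun _ _ => erefl) (fun Hv e He => Punit_val Hv He).
End P.

Section PMor.
Variables (v : variant) (A B : obj v) (f : hom A B).

Lemma inP_map (x : A) : inP x -> inP (f x).
Proof. by move=> Hx C phi n; exact: (Hx C (pcomp phi f) n). Qed.

Definition Pmorfun (x : Pobj A) : Pobj B :=
  exist _ (f (proj1_sig x)) (inP_map (proj2_sig x)).

Lemma Pmor_unit : vunital v -> forall e : Pobj A, is_unit e -> is_unit (Pmorfun e).
Proof.
move=> Hv e He; apply: Punit_of; apply: hom_unit => //.
exact: Punit_val.
Qed.

Definition Pmor : hom (Pobj A) (Pobj B).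
Proof.
refine (@Hom v (Pobj A) (Pobj B) Pmorfun _ _ _ Pmor_unit); intros;
  apply: Peq; simpl.
- exact: hom_add. - exact: hom_scale. - exact: hom_mul.
Defined.
End PMor.

Definition PF (v : variant) : functor v.
Proof.
refine (@Functor v (@Pobj v) (@Pmor v) _ _ _).
- by move=> A B f g H x; apply: Peq; apply: H.
- by move=> A x; apply: Peq.
- by move=> A B C f g x; apply: Peq.
Defined.

Definition incl (v : variant) : nattrans (PF v) (idF v) :=
  @NatTrans v (PF v) (idF v) (@iota_hom v) (fun A B f x => erefl).

End Defs.

(* Every elementary homotopy H : A -> B[x] is constant on P(A), so
   ev_1 o H and ev_0 o H agree there; this makes P homotopy invariant.
   Conversely, let beta : G -> id with G homotopy invariant.  On C[x] the
   constant-term endomorphism p |-> p(0) is elementarily homotopic to the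
   identity through p(x) |-> p(xt), so G fixes it and, by naturality of
   beta, p(0) = p for every p in the image of beta_(C[x]).  For
   phi : A -> C[x], naturality again gives phi (beta_A y) = beta_(C[x]) z
   for some z, a constant polynomial: beta_A lands in P(A).  Corestricting
   beta gives the factorisation, which is unique since the inclusions are
   injective. *)
From Pilot Require Import Defs.
From mathcomp Require Import all_boot all_algebra.
From mathcomp Require Import zify.
From Stdlib Require Import ProofIrrelevance FunctionalExtensionality Relations.
Set Implicit Arguments.
Unset Strict Implicit.
Unset Printing Implicit Defensive.
Arguments azero {F a0}.

Section FiniteSums.
Variables (F : fieldType) (C : alg F).
Implicit Types (h g : nat -> C) (x y z w : C).

Lemma eq_csum n h g : (forall i, (i < n)%N -> h i = g i) -> csum n h = csum n g.
Proof.
elim: n => [//|n IH] Hhg /=.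
by rewrite IH ?Hhg // => i Hi; apply: Hhg; apply: ltnW.
Qed.

Lemma aaddACA x y z w : aadd (aadd x y) (aadd z w) = aadd (aadd x z) (aadd y w).
Proof. by rewrite -!aaddA (aaddA y) (aaddC y) -aaddA. Qed.

Lemma csumD n h g : csum n (fun i => aadd (h i) (g i)) = aadd (csum n h) (csum n g).
Proof. by elim: n => [|n IH] /=; rewrite ?aadd0 // IH aaddACA. Qed.

Lemma csumZ a n h : csum n (fun i => ascale a (h i)) = ascale a (csum n h).
Proof. by elim: n => [|n IH] /=; rewrite ?ascale0 // IH ascaleDr. Qed.

Lemma amul_csumr x n h : amul x (csum n h) = csum n (fun i => amul x (h i)).
Proof. by elim: n => [|n IH] /=; rewrite ?amul0r // amulDr IH. Qed.

Lemma amul_csuml x n h : amul (csum n h) x = csum n (fun i => amul (h i) x).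
Proof. by elim: n => [|n IH] /=; rewrite ?amul0l // amulDl IH. Qed.

Lemma csum_recl n h : csum n.+1 h = aadd (h 0) (csum n (fun i => h i.+1)).
Proof.
elim: n => [|n IH] /=; first by rewrite aadd0 aaddx0.
by rewrite /= in IH; rewrite IH aaddA.
Qed.

Lemma csum_rev n h : csum n h = csum n (fun i => h (n - i.+1)).
Proof.
elim: n => [//|n IH]; rewrite [in RHS]csum_recl /= IH subSS subn0 aaddC.
by congr aadd; apply: eq_csum => i _; rewrite subSS.
Qed.

Lemma exchange_csum_triangle N (f : nat -> nat -> C) :
  csum N (fun k => csum k.+1 (fun i => f i k)) =
  csum N (fun i => csum (N - i) (fun j => f i (i + j))).
Proof.
elim: N => [//|N IH].
rewrite [LHS]/= IH [RHS]/= subSn // subnn /= aadd0 addn0.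
rewrite (@eq_csum N (fun i => csum (N.+1 - i) (fun j => f i (i + j)))
   (fun i => aadd (csum (N - i) (fun j => f i (i + j))) (f i N))); last first.
  by move=> i Hi; rewrite subSn ?(ltnW Hi) //= subnKC // ltnW.
by rewrite csumD aaddA.
Qed.

Lemma csum_delta N k x :
  csum N (fun i => if i == k then x else azero) = if (k < N)%N then x else azero.
Proof.
elim: N => [//|N IH] /=; rewrite IH ltnS.
by case: (ltngtP k N); rewrite ?aaddx0 ?aadd0.
Qed.

End FiniteSums.

Section PolynomialAlgebra.
Variables (F : fieldType) (C : alg F).
Implicit Types (p q r : nat -> C).

Definition fin_supp p := exists N, forall n, (N <= n)%N -> p n = azero.
Definition fpoly := {p : nat -> C | fin_supp p}.
Definition pcoef (p : fpoly) : nat -> C := proj1_sig p.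

Lemma fpolyP (p q : fpoly) : (forall n, pcoef p n = pcoef q n) -> p = q.
Proof.
case: p => p pP; case: q => q qP /= Epq.
have E : p = q by apply: functional_extensionality.
by subst q; rewrite (proof_irrelevance _ pP qP).
Qed.

Definition pconv p q n := csum n.+1 (fun i => amul (p i) (q (n - i))).

Lemma fin_supp0 : fin_supp (fun _ => azero).
Proof. by exists 0. Qed.

Lemma fin_suppD p q : fin_supp p -> fin_supp q -> fin_supp (fun n => aadd (p n) (q n)).
Proof.
move=> [N HN] [M HM]; exists (N + M) => n Hn.
by rewrite HN ?HM ?aadd0 //; apply: leq_trans Hn; [apply: leq_addl | apply: leq_addr].
Qed.

Lemma fin_suppN p : fin_supp p -> fin_supp (fun n => aopp (p n)).
Proof. by move=> [N HN]; exists N => n Hn; rewrite HN // -[aopp _]aaddx0 aaddN. Qed.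

Lemma fin_suppZ a p : fin_supp p -> fin_supp (fun n => ascale a (p n)).
Proof. by move=> [N HN]; exists N => n Hn; rewrite HN // ascale0. Qed.

Lemma fin_suppM p q : fin_supp p -> fin_supp q -> fin_supp (pconv p q).
Proof.
move=> [N HN] [M HM]; exists (N + M) => n Hn; apply: csum_eq0 => i Hi.
case: (leqP N i) => HiN; first by rewrite HN // amul0l.
by rewrite HM ?amul0r //; lia.
Qed.

Lemma pconvA p q r n : pconv p (pconv q r) n = pconv (pconv p q) r n.
Proof.
rewrite /pconv; transitivity (csum n.+1 (fun i => csum (n.+1 - i)
    (fun j => amul (amul (p i) (q (i + j - i))) (r (n - (i + j)))))).
  apply: eq_csum => i Hi; rewrite amul_csumr subSn; last by rewrite -ltnS.
  by apply: eq_csum => j _; rewrite addKn amulA subnDA.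
rewrite -(exchange_csum_triangle n.+1
  (fun i k => amul (amul (p i) (q (k - i))) (r (n - k)))).
by apply: eq_csum => k _; rewrite amul_csuml.
Qed.

Definition fpoly_alg : alg F.
Proof.
refine (@Alg F fpoly (exist _ _ fin_supp0)
  (fun p q : fpoly => exist _ _ (fin_suppD (proj2_sig p) (proj2_sig q)))
  (fun p : fpoly => exist _ _ (fin_suppN (proj2_sig p)))
  (fun a (p : fpoly) => exist _ _ (fin_suppZ a (proj2_sig p)))
  (fun p q : fpoly => exist _ _ (fin_suppM (proj2_sig p) (proj2_sig q)))
  _ _ _ _ _ _ _ _ _ _ _ _ _); intros; apply: fpolyP => n; rewrite /pcoef /=.
- exact: aaddA.  - exact: aaddC.  - exact: aadd0.  - exact: aaddN.
- exact: ascaleA. - exact: ascale1. - exact: ascaleDr. - exact: ascaleDl.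
- exact: pconvA.
- by rewrite /pconv -csumD; apply: eq_csum => i _; rewrite amulDl.
- by rewrite /pconv -csumD; apply: eq_csum => i _; rewrite amulDr.
- by rewrite /pconv -csumZ; apply: eq_csum => i _; rewrite amulZl.
- by rewrite /pconv -csumZ; apply: eq_csum => i _; rewrite amulZr.
Defined.

Lemma pcoefM (p q : fpoly_alg) n : pcoef (amul p q) n = pconv (pcoef p) (pcoef q) n.
Proof. by []. Qed.

Lemma pcoef_csum N (h : nat -> fpoly_alg) n :
  pcoef (csum N h) n = csum N (fun i => pcoef (h i) n).
Proof. by elim: N => [//|N IH] /=; rewrite -IH. Qed.

Lemma pconvC p q n : acomm C -> pconv p q n = pconv q p n.
Proof.
move=> Ccomm; rewrite /pconv csum_rev; apply: eq_csum => i Hi.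
by rewrite subSS subKn; [apply: Ccomm | rewrite -ltnS].
Qed.

Lemma pconv_lowest p q k l :
  (forall i, (i < k)%N -> p i = azero) -> (forall j, (j < l)%N -> q j = azero) ->
  (forall m, (m < k + l)%N -> pconv p q m = azero) /\
  pconv p q (k + l) = amul (p k) (q l).
Proof.
move=> Hp Hq; split.
  move=> m Hm; apply: csum_eq0 => i Hi.
  case: (ltnP i k) => Hik; first by rewrite Hp // amul0l.
  by rewrite Hq ?amul0r //; lia.
rewrite /pconv (@eq_csum _ _ _ _ (fun i => if i == k then amul (p k) (q l) else azero)).
  by rewrite csum_delta ltnS leq_addr.
move=> i Hi; case: (ltngtP i k) => Hik.
- by rewrite Hp // amul0l.
- by rewrite Hq ?amul0r //; lia.
- by rewrite Hik addKn.
Qed.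

Lemma apow_lowest (p : fpoly_alg) k :
  (forall i, (i < k)%N -> pcoef p i = azero) -> forall m,
  (forall i, (i < k * m.+1)%N -> pcoef (apow p m) i = azero) /\
  pcoef (apow p m) (k * m.+1) = apow (pcoef p k) m.
Proof.
move=> Hp; elim=> [|m [IHlow IHk]]; first by rewrite muln1.
have [Hlow Hk] := pconv_lowest Hp IHlow.
rewrite mulnS; split; first exact: Hlow.
by rewrite [pcoef _ _]Hk IHk.
Qed.

(* The lowest coefficient of a nilpotent polynomial is nilpotent. *)
Lemma fpoly_reduced : areduced C -> areduced fpoly_alg.
Proof.
move=> Cred p m Hpm; apply: fpolyP => n.
suff Hlow : forall k i, (i < k)%N -> pcoef p i = azero by apply: (Hlow n.+1).
elim=> [//|k IH] i; rewrite ltnS leq_eqVlt => /orP [/eqP ->|]; last exact: IH.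
apply: (Cred _ m); have [_ <-] := apow_lowest IH m.
by rewrite Hpm.
Qed.

Lemma is_unit_uniq (A : alg F) (e e' : A) : is_unit e -> is_unit e' -> e = e'.
Proof. by move=> He He'; case: (He e') => <- _; case: (He' e) => _ ->. Qed.

Definition pconst (c : C) : fpoly_alg.
Proof. by exists (fun n => if n is 0 then c else azero); exists 1 => -[]. Defined.

Lemma pconst_unit u : is_unit u -> is_unit (pconst u).
Proof.
move=> Hu p; split; apply: fpolyP => n; rewrite pcoefM /pconv.
- rewrite csum_recl /= subn0 csum_eq0 ?aaddx0; first by case: (Hu (pcoef p n)).
  by move=> i _; rewrite amul0l.
- rewrite /= subnn /= csum_eq0 ?aadd0; first by case: (Hu (pcoef p n)).
  by move=> i Hi; rewrite -(subnSK Hi) /= amul0r.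
Qed.

Definition pmonomial (k : nat) (a : C) : fpoly_alg.
Proof.
exists (fun m => if m == k then a else azero).
by exists k.+1 => n Hn; case: eqP => // E; move: Hn; rewrite E ltnn.
Defined.

Lemma pmonomialM i j a b m :
  pcoef (amul (pmonomial i a) (pmonomial j b)) m =
  if m == i + j then amul a b else azero.
Proof.
rewrite pcoefM /pconv (@eq_csum _ _ _ _
  (fun k => if k == i then (if m - i == j then amul a b else azero) else azero)).
  rewrite csum_delta ltnS; case: leqP => Hm.
    by have -> : (m - i == j) = (m == i + j) by apply/eqP/eqP; lia.
  by case: eqP => //; lia.
move=> k _ /=; case: (k =P i) => [->|_]; last by rewrite amul0l.
by case: eqP => _ //; rewrite amul0r.
Qed.

End PolynomialAlgebra.

Section PolynomialObject.
Variables (F : fieldType) (v : variant) (C : obj F v).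

Lemma fpoly_in_cat : in_cat v (fpoly_alg C).
Proof.
case: (oP C) => Cunit Ccomm Cred; split.
- by move=> Hv; case: (Cunit Hv) => u Hu; exists (pconst u); apply: pconst_unit.
- by move=> Hv p q; apply: fpolyP => n; rewrite !pcoefM pconvC //; apply: Ccomm.
- by move=> Hv; apply: fpoly_reduced; apply: Cred.
Qed.

Definition fpoly_obj : obj F v := Obj fpoly_in_cat.

Lemma fpoly_unit_const (e : fpoly_obj) :
  vunital v -> is_unit e -> exists u : C, is_unit u /\ e = pconst u.
Proof.
move=> Hv He; case: (oP C) => /(_ Hv) [u Hu] _ _; exists u; split => //.
exact: is_unit_uniq He (pconst_unit Hu).
Qed.

Definition const_term_hom : Defs.hom fpoly_obj fpoly_obj.
Proof.
refine (@Defs.Hom F v fpoly_obj fpoly_obj (fun p => pconst (pcoef p 0)) _ _ _ _).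
- by move=> p q; apply: fpolyP => -[|n] //=; rewrite aadd0.
- by move=> a p; apply: fpolyP => -[|n] //=; rewrite ascale0.
- move=> p q; apply: fpolyP => -[//|n].
  rewrite [LHS]/= pcoefM /pconv csum_eq0 // => -[|i] Hi.
    by rewrite subn0 /= amul0r.
  by rewrite /= amul0l.
- move=> Hv e He; case: (fpoly_unit_const Hv He) => u [Hu ->].
  exact: pconst_unit.
Defined.

(* p(x) |-> p(xt), as a polynomial in t with coefficients in C[x] *)
Definition rescale_polyhom : polyhom fpoly_obj fpoly_obj.
Proof.
refine (@PolyHom F v fpoly_obj fpoly_obj
  (fun n p => pmonomial n (pcoef p n)) _ _ _ _ _).
- move=> p; case: (proj2_sig p) => N HN; exists N => n Hn; apply: fpolyP => m.
  by rewrite /= /pcoef HN //; case: eqP.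
- by move=> n p q; apply: fpolyP => m /=; case: eqP => _ //; rewrite aadd0.
- by move=> n a p; apply: fpolyP => m /=; case: eqP => _ //; rewrite ascale0.
- move=> n p q; apply: fpolyP => m; rewrite pcoef_csum.
  rewrite (@eq_csum _ _ _ _
    (fun i => if m == n then amul (pcoef p i) (pcoef q (n - i)) else azero)).
    by rewrite /=; case: eqP => _ //; rewrite aaddx0 csum_eq0.
  by move=> i Hi; rewrite pmonomialM subnKC // -ltnS.
- move=> Hv e He; case: (fpoly_unit_const Hv He) => u [Hu ->]; split.
    have -> : pmonomial 0 (pcoef (pconst u) 0) = pconst u by apply: fpolyP => -[|m].
    exact: pconst_unit.
  by move=> n; apply: fpolyP => m /=; case: eqP.
Defined.

Lemma const_term_homotopic_id : homotopic const_term_hom (idhom fpoly_obj).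
Proof.
apply: rt_step; exists rescale_polyhom; split.
  by move=> p; apply: fpolyP => -[|m].
move=> p N Hfin; apply: fpolyP => m; rewrite pcoef_csum.
rewrite (@eq_csum _ _ _ _ (fun n => if n == m then pcoef p m else azero)).
  rewrite csum_delta; case: ltnP => // HNm.
  by have := f_equal (fun q => pcoef q m) (Hfin m HNm); rewrite /= eqxx.
by move=> n _; rewrite /= eq_sym; case: eqP => [->|].
Qed.

Definition polyhom_hom (A : obj F v) (phi : polyhom A C) : Defs.hom A fpoly_obj.
Proof.
refine (@Defs.Hom F v A fpoly_obj
  (fun a => exist _ (fun n => coef phi n a) (coef_fin phi a)) _ _ _ _).
- by move=> x y; apply: fpolyP => n; rewrite /= coef_add.
- by move=> a x; apply: fpolyP => n; rewrite /= coef_scale.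
- by move=> x y; apply: fpolyP => n; rewrite /= coef_mul.
- move=> Hv e He; have [He0 HeS] := coef_unit phi Hv He.
  set pe := exist _ _ _.
  have -> : pe = pconst (coef phi 0 e) by apply: fpolyP => -[|n] //=.
  exact: pconst_unit.
Defined.

End PolynomialObject.

Lemma nattrans_id_inP (F : fieldType) (v : variant) (G : functor F v)
    (beta : nattrans G (idF F v)) :
  homotopy_invariant G -> forall (A : obj F v) (y : Fobj G A), inP (beta A y).
Proof.
move=> HG A y C phi n.
set z := Fmor G (polyhom_hom phi) y.
have beta_phi : polyhom_hom phi (beta A y) = beta (fpoly_obj C) z :=
  ntc_nat beta (polyhom_hom phi) y.
have G_const_term : Fmor G (const_term_hom C) z = z.
  by rewrite (HG _ _ _ _ (const_term_homotopic_id C) z) (@Fmor_id _ _ G _ z).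
have beta_const : const_term_hom C (beta (fpoly_obj C) z) = beta (fpoly_obj C) z.
  by rewrite -[in RHS]G_const_term; exact: (ntc_nat beta (const_term_hom C) z).
by have := f_equal (fun q => pcoef q n.+1) beta_phi; rewrite -beta_const.
Qed.

Lemma PF_homotopy_invariant (F : fieldType) (v : variant) :
  homotopy_invariant (PF F v).
Proof.
move=> A B f g; elim=> {f g} [f g [H [H0 H1]]|f|f g h _ IHfg _ IHgh] x.
- apply: Peq => /=; rewrite -(H1 (proj1_sig x) 1); first by rewrite /= aadd0 H0.
  by case=> [//|k] _; apply: (proj2_sig x).
- by [].
- by rewrite IHfg IHgh.
Qed.

Section Corestriction.
Variables (F : fieldType) (v : variant) (G : functor F v) (beta : nattrans G (idF F v)).
Hypothesis HG : homotopy_invariant G.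

Definition corestrict_hom (A : obj F v) : Defs.hom (Fobj G A) (Pobj A).
Proof.
refine (@Defs.Hom F v (Fobj G A) (Pobj A)
  (fun y => exist _ (beta A y) (nattrans_id_inP beta HG y)) _ _ _ _).
- by move=> x y; apply: Peq; rewrite /= hom_add.
- by move=> a x; apply: Peq; rewrite /= hom_scale.
- by move=> x y; apply: Peq; rewrite /= hom_mul.
- by move=> Hv e He; apply: Punit_of; exact: (hom_unit (beta A) Hv He).
Defined.

Definition corestrict : nattrans G (PF F v).
Proof.
refine (@NatTrans F v G (PF F v) corestrict_hom _).
by move=> A B f x; apply: Peq; exact: (ntc_nat beta f x).
Defined.

End Corestriction.

Theorem mainTheorem15 (F : fieldType) (v : variant) :
  homotopy_invariant (PF F v) /\
  forall (G : functor F v) (beta : nattrans G (idF F v)),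
    homotopy_invariant G ->
    exists betabar : nattrans G (PF F v),
      (forall A : obj F v, homeq (homcomp (incl F v A) (betabar A)) (beta A)) /\
      forall betabar' : nattrans G (PF F v),
        (forall A : obj F v, homeq (homcomp (incl F v A) (betabar' A)) (beta A)) ->
        forall A : obj F v, homeq (betabar' A) (betabar A).
Proof.
split; first exact: PF_homotopy_invariant.
move=> G beta HG; exists (corestrict beta HG); split; first by [].
by move=> betabar' Hfactor A x; apply: Peq; exact: (Hfactor A x).
Qed.
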